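(* Let $G$ be a graph and let $P=\langle p_1,\dots,p_m\rangle$ and $Q=\langle q_1,\dots,q_n\rangle$ be vertex-disjoint induced paths in $G$ such that $\mathrm{tw}\big(G[V(P)\cup V(Q)]\cup\{p_1q_1,p_mq_n\}\big)\le 2$. Then for every $i,j$ with $p_iq_j\in E(G)$, the set $\{p_i,q_j\}$ separates $\{p_1,\dots,p_{i-1}\}\cup\{q_1,\dots,q_{j-1}\}$ from $\{p_{i+1},\dots,p_m\}\cup\{q_{j+1},\dots,q_n\}$ in $G[V(P)\cup V(Q)]$.
   Context: $\mathrm{tw}$ is treewidth. A path is induced if it is an induced subgraph. For a graph $F$ and a set of vertex pairs $E'$, $F\cup E'$ is $F$ with these pairs added as edges. A set $S$ separates $A$ from $B$ (disjoint from $S$) if no path in the graph minus $S$ joins a vertex of $A$ to a vertex of $B$. *)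

From mathcomp Require Import all_boot.
Set Implicit Arguments. Unset Strict Implicit. Unset Printing Implicit Defensive.

(* A (finite simple) graph is given by a vertex set V : {set T} on a finType T
   and an edge relation E : rel T (only edges between vertices of V matter). *)

Definition simple_graph (T : finType) (e : rel T) : Prop :=
  symmetric e /\ irreflexive e.

(* A finite tree: symmetric irreflexive relation on a nonempty finType which is
   connected and has exactly #|I| - 1 (unordered) edges. *)
Definition is_tree (I : finType) (t : rel I) : Prop :=
  [/\ symmetric t, irreflexive t, 0 < #|I|,
      (forall i j, connect t i j) &
      #|[set p : I * I | t p.1 p.2]| = 2 * (#|I|).-1].

Definition tree_decomposition (T : finType) (V : {set T}) (E : rel T)
    (I : finType) (t : rel I) (B : I -> {set T}) : Prop :=
  [/\ is_tree t,
      (forall i, B i \subset V),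
      (forall v, v \in V -> exists i, v \in B i),
      (forall u v, u \in V -> v \in V -> E u v -> exists i, (u \in B i) && (v \in B i)) &
      (forall v i j, v \in B i -> v \in B j ->
         connect [rel a b | t a b && (v \in B a) && (v \in B b)] i j)].

Definition tw_le (T : finType) (V : {set T}) (E : rel T) (k : nat) : Prop :=
  exists (I : finType) (t : rel I) (B : I -> {set T}),
    tree_decomposition V E t B /\ forall i, #|B i| <= k.+1.

Definition induced_rel (T : finType) (e : rel T) (S : {set T}) : rel T :=
  [rel x y | e x y && (x \in S) && (y \in S)].

Definition induced_path (T : finType) (e : rel T) (P : seq T) : Prop :=
  [/\ 0 < size P, uniq P &
      forall k l : 'I_(size P),
        e (tnth (in_tuple P) k) (tnth (in_tuple P) l) =
        ((k.+1 == l) || (l.+1 == k))].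

Definition separates (T : finType) (V : {set T}) (E : rel T)
    (X A B : {set T}) : Prop :=
  forall a b, a \in A -> b \in B ->
    ~~ connect [rel x y | E x y && (x \in V :\: X) && (y \in V :\: X)] a b.

Definition add2edges (T : finType) (F : rel T) (x1 y1 x2 y2 : T) : rel T :=
  [rel x y | [|| F x y, (x == x1) && (y == y1), (x == y1) && (y == x1),
                 (x == x2) && (y == y2) | (x == y2) && (y == x2)]].

From mathcomp Require Import all_boot zify.

Set Implicit Arguments.
Unset Strict Implicit.
Unset Printing Implicit Defensive.

(* The two paths, closed up by the edges p_1q_1 and p_mq_n, form a spanning
   cycle C of a graph of treewidth at most 2, in which p_iq_j is a chord.  An
   edge of G[V(P) u V(Q)] between the two arcs of C cut out by that chord would
   be a second, crossing chord, and two crossing chords of a cycle yield a K4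
   minor, whose four branch sets must all meet a single bag of any tree
   decomposition: the bags meeting a connected branch set form a subtree, and
   pairwise intersecting subtrees of a tree share a vertex (Helly).  So no such
   edge exists, and every path from one arc to the other uses p_i or q_j. *)

Definition connected_in (T : finType) (e : rel T) (A : {set T}) : Prop :=
  {in A &, forall x y, connect (induced_rel e A) x y}.

(* Ordered pairs are counted, so each edge counts twice, as in [is_tree]. *)
Definition edge_count (T : finType) (e : rel T) (A : {set T}) : nat :=
  #|[set p : T * T | induced_rel e A p.1 p.2]|.

Lemma induced_rel_sym (T : finType) (e : rel T) (A : {set T}) :
  symmetric e -> symmetric (induced_rel e A).
Proof.
move=> e_sym x y; rewrite /induced_rel /= e_sym.
by case: (x \in A); case: (y \in A); rewrite ?andbT ?andbF.
Qed.

Lemma connect_induced_neighbour (T : finType) (e : rel T) (A : {set T}) x y :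
  connect (induced_rel e A) x y -> y != x -> exists2 z, z \in A & e x z.
Proof.
case/connectP=> [[|z s]] /=; first by move=> _ ->; rewrite eqxx.
by case/andP=> /andP[/andP[exz _] zA] _ _; exists z.
Qed.

Lemma uniq_flatten_mem_nth (T : eqType) (ss : seq (seq T)) x i j :
  uniq (flatten ss) -> x \in nth [::] ss i -> x \in nth [::] ss j -> i = j.
Proof.
have mem_flatten ss' k : x \in nth [::] ss' k -> x \in flatten ss'.
  case: (ltnP k (size ss')) => [kn xk | kn]; last by rewrite nth_default.
  by apply/flattenP; exists (nth [::] ss' k); rewrite ?mem_nth.
elim: ss i j => [|s ss IHss] [|i] [|j] //=; rewrite ?nth_nil //;
  rewrite cat_uniq => /and3P[_ /hasPn s_ss ss_uniq].
- by move=> xs /mem_flatten/s_ss; rewrite xs.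
- by move=> /mem_flatten/s_ss; rewrite /= => /negbTE ->.
- by move=> xi xj; congr _.+1; apply: IHss xi xj.
Qed.

Lemma path_rev_cons (T : eqType) (e : rel T) x y s :
  symmetric e -> path e x (rev (y :: s)) = e x (last y s) && path e y s.
Proof.
move=> e_sym; rewrite (lastI y s) rev_rcons /= rev_path.
by congr (_ && _); apply: eq_path => a b; rewrite /= e_sym.
Qed.

Lemma cycle_cat_rev (T : eqType) (e : rel T) p Ps q Qs :
  symmetric e -> path e p Ps -> path e q Qs -> e (last p Ps) (last q Qs) -> e q p ->
  cycle e (p :: Ps ++ rev (q :: Qs)).
Proof.
move=> e_sym pPs qQs e_last e_head.
rewrite /= rcons_cat cat_path rcons_path path_rev_cons // rev_cons last_rcons.
by rewrite pPs qQs e_last e_head.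
Qed.

Lemma rot_cat_rev (T : Type) x0 (P Q : seq T) i j : i < size P -> j < size Q ->
  rot i (P ++ rev Q) =
  nth x0 P i :: (drop i.+1 P ++ rev (drop j.+1 Q))
    ++ nth x0 Q j :: (rev (take j Q) ++ take i P).
Proof.
move=> iP jQ; rewrite /rot drop_cat take_cat iP (drop_nth x0 iP).
by rewrite -{1}(cat_take_drop j Q) (drop_nth x0 jQ) rev_cat rev_cons cat_rcons -!catA.
Qed.

Section Trees.

Variables (I : finType) (t : rel I).
Hypotheses (t_sym : symmetric t) (t_irr : irreflexive t).

Lemma connected_in_setD1_leaf (A : {set I}) l l' :
  connected_in t A -> (forall u, u \in A -> t l u -> u = l') ->
  connected_in t (A :\ l).
Proof.
move=> A_conn leaf x y /setD1P[xl xA] /setD1P[yl yA].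
(* Replacing [l] by its only neighbour [l'] turns walks in [A] into walks in [A :\ l]. *)
pose f z := if z == l then l' else z.
have step u v : induced_rel t A u v -> connect (induced_rel t (A :\ l)) (f u) (f v).
  rewrite /= => /andP[/andP[tuv uA] vA]; rewrite /f.
  case: (eqVneq u l) => [eul | ul].
    by rewrite (leaf v) -?eul // if_same.
  case: (eqVneq v l) => [evl | vl].
    by rewrite (leaf u) // t_sym -evl.
  by apply: connect1; rewrite /induced_rel /= tuv !inE ul vl uA vA.
have C_closed : closed (induced_rel t A)
    [pred z | connect (induced_rel t (A :\ l)) x (f z)].
  apply: intro_closed; first exact/sym_connect_sym/induced_rel_sym.
  by move=> u v /step uv /= xu; apply: connect_trans xu uv.
have := closed_connect C_closed (A_conn x y xA yA).
by rewrite !inE /f (negbTE xl) (negbTE yl) connect0 => <-.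
Qed.

Lemma edge_count_degree_sum (W : {set I}) :
  edge_count t W = \sum_(x in W) #|[set y in W | t x y]|.
Proof.
rewrite /edge_count -sum1_card.
rewrite (eq_bigl (fun p : I * I => (p.1 \in W) && (t p.1 p.2 && (p.2 \in W)))); last first.
  move=> [u v]; rewrite !inE /induced_rel /=.
  by case: (u \in W); case: (v \in W); case: (t u v).
rewrite -(pair_big_dep (mem W) (fun u v => t u v && (v \in W)) (fun _ _ => 1)) /=.
by apply: eq_bigr => u _; rewrite -sum1_card; apply: eq_bigl => v; rewrite !inE andbC.
Qed.

Lemma exists_leaf (W : {set I}) n :
  #|W| = n.+2 -> connected_in t W -> edge_count t W = 2 * n.+1 ->
  exists l l', [/\ l \in W, l' \in W, t l l' & forall u, u \in W -> t l u -> u = l'].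
Proof.
move=> cardW W_conn edgesW.
have [l /andP[lW deg_l]] : exists l, (l \in W) && (#|[set y in W | t l y]| <= 1).
  apply/existsP; apply: contraLR isT; rewrite negb_exists => /forallP deg_ge2.
  have : \sum_(x in W) 2 <= \sum_(x in W) #|[set y in W | t x y]|.
    apply: leq_sum => x xW; move: (deg_ge2 x); rewrite xW /=; lia.
  by rewrite -edge_count_degree_sum edgesW sum_nat_const cardW; lia.
have [y yW yl] : exists2 y, y \in W & y != l.
  have [a [b [aW bW ab]]] : exists a b, [/\ a \in W, b \in W & a != b].
    by apply/card_gt1P; rewrite cardW.
  by case: (eqVneq a l) => [eal | ?]; [exists b; rewrite // -eal eq_sym | exists a].
have [l' l'W tll'] : exists2 l', l' \in W & t l l'.
  exact: connect_induced_neighbour (W_conn l y lW yW) yl.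
exists l, l'; split=> // u uW tlu.
have : [set y in W | t l y] = [set l'].
  by apply/eqP; rewrite eq_sym eqEcard sub1set inE l'W tll' cards1.
by move/setP/(_ u); rewrite !inE uW tlu => /esym/eqP.
Qed.

Lemma edge_count_setD1_leaf (W : {set I}) l l' :
  l \in W -> l' \in W -> t l l' ->
  (forall u, u \in W -> t l u -> u = l') ->
  edge_count t (W :\ l) = edge_count t W - 2.
Proof.
move=> lW l'W tll' leaf.
have ll' : l != l' by apply: contraTneq tll' => ->; rewrite t_irr.
rewrite /edge_count.
have -> : [set p : I * I | induced_rel t (W :\ l) p.1 p.2]
    = [set p : I * I | induced_rel t W p.1 p.2] :\: [set (l, l'); (l', l)].
  apply/setP => [[u v]]; rewrite !inE /induced_rel /= !inE !xpair_eqE.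
  case: (eqVneq u l) => [-> | ul] /=.
    case tv: (t l v); case vW: (v \in W); rewrite ?andbF //=.
    by rewrite (leaf v) ?eqxx.
  case: (eqVneq v l) => [-> | vl] /=; last by rewrite andbF.
  case tu: (t u l); case uW: (u \in W); rewrite ?andbF //=.
  by rewrite t_sym in tu; rewrite (leaf u) ?eqxx.
rewrite cardsD (setIidPr _) ?cards2 ?xpair_eqE ?negb_and ?ll' //.
apply/subsetP => z; rewrite !inE /induced_rel => /orP[] /eqP -> /=.
  by rewrite tll' lW l'W.
by rewrite t_sym tll' lW l'W.
Qed.

Lemma leaf_neighbour_mem (W A : {set I}) l l' :
  A \subset W -> connected_in t A -> (forall u, u \in W -> t l u -> u = l') ->
  l \in A -> A != [set l] -> l' \in A.
Proof.
move=> sAW A_conn leaf lA A_neq1.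
have [x xA xl] : exists2 x, x \in A & x != l.
  apply/exists_inP; apply: contraNT A_neq1; rewrite negb_exists_in => /forall_inP A_l.
  by apply/eqP/setP => z; rewrite inE; apply/idP/eqP => [/A_l/negbNE/eqP | ->].
have [z zA tlz] := connect_induced_neighbour (A_conn l x lA xA) xl.
by rewrite -(leaf z (subsetP sAW z zA) tlz).
Qed.

Lemma subtree_helly (K : finType) n (W : {set I}) (S : K -> {set I}) :
  #|W| = n.+1 -> connected_in t W -> edge_count t W = 2 * n ->
  (forall k, S k \subset W) -> (forall k, connected_in t (S k)) ->
  (forall k m, S k :&: S m != set0) -> exists c, forall k, c \in S k.
Proof.
elim: n W S => [|n IHn] W S cardW W_conn edgesW sSW S_conn S_meet.
  have /cards1P[w defW] : #|W| == 1 by rewrite cardW.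
  exists w => k; case/set0Pn: (S_meet k k) => x; rewrite setIid => xS.
  by have := subsetP (sSW k) x xS; rewrite defW inE => /eqP <-.
have [l [l' [lW l'W tll' leaf]]] := exists_leaf cardW W_conn edgesW.
have [k0 /eqP Sk0 | S_neq1] := pickP (fun k => S k == [set l]).
  exists l => m; case/set0Pn: (S_meet k0 m) => x.
  by rewrite inE Sk0 inE => /andP[/eqP ->].
have leafS k : forall u, u \in S k -> t l u -> u = l'.
  by move=> u /(subsetP (sSW k)); apply: leaf.
have [c Sc] : exists c, forall k, c \in S k :\ l.
  apply: (IHn (W :\ l)).
  - by move: cardW; rewrite (cardsD1 l W) lW => -[].
  - exact: connected_in_setD1_leaf leaf.
  - by rewrite (edge_count_setD1_leaf lW l'W tll' leaf) edgesW; lia.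
  - by move=> k; apply: setSD.
  - by move=> k; apply: connected_in_setD1_leaf (leafS k).
  - move=> k m; case/set0Pn: (S_meet k m) => x /setIP[xk xm].
    have l'S p : l \in S p -> l' \in S p.
      by move=> lS; apply: leaf_neighbour_mem (sSW p) (S_conn p) leaf lS (negbT (S_neq1 p)).
    apply/set0Pn; case: (eqVneq x l) => [exl | xl].
      have l'l : l' != l by apply: contraTneq tll' => ->; rewrite t_irr.
      by exists l'; rewrite !inE l'l !l'S // -exl.
    by exists x; rewrite !inE xl xk xm.
by exists c => k; case/setD1P: (Sc k).
Qed.

End Trees.

Lemma connected_in_bags_meeting (T I : finType) (V : {set T}) (E : rel T)
    (t : rel I) (B : I -> {set T}) (X : {set T}) :
  tree_decomposition V E t B -> X \subset V -> connected_in E X ->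
  connected_in t [set i | B i :&: X != set0].
Proof.
case=> _ _ _ edge_bag bags_conn sXV X_conn i j.
set M := [set i | B i :&: X != set0].
have bags_v v k k' : v \in X -> v \in B k -> v \in B k' -> connect (induced_rel t M) k k'.
  move=> vX vk vk'; apply: connect_sub (bags_conn v k k' vk vk') => a b.
  case/andP=> /andP[tab va] vb; apply: connect1; rewrite /induced_rel /= tab !inE.
  by apply/andP; split; apply/set0Pn; exists v; rewrite inE ?va ?vb vX.
pose C x := forall k, x \in B k -> connect (induced_rel t M) i k.
have C_step x y : induced_rel E X x y -> C x -> C y.
  case/andP=> /andP[Exy xX] yX Cx k yk.
  have [c /andP[xc yc]] := edge_bag x y (subsetP sXV x xX) (subsetP sXV y yX) Exy.
  exact: connect_trans (Cx c xc) (bags_v y c k yX yc yk).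
rewrite !inE => /set0Pn[v /setIP[vi vX]] /set0Pn[w /setIP[wj wX]].
have Cv : C v by move=> k; apply: bags_v vX vi.
case/connectP: (X_conn v w vX wX) => s + w_last; rewrite {}w_last in wj; clear wX.
elim: s v Cv wj {vi vX} => [|z s IHs] v Cv wj /=; first by move=> _; apply: Cv.
by case/andP=> vz zs; apply: (IHs z) wj zs; apply: C_step vz Cv.
Qed.

Lemma bag_meets_branch_sets (T I K : finType) (V : {set T}) (E : rel T)
    (t : rel I) (B : I -> {set T}) (X : K -> {set T}) :
  tree_decomposition V E t B ->
  (forall k, X k \subset V) -> (forall k, X k != set0) ->
  (forall k, connected_in E (X k)) ->
  (forall k m, k != m -> exists u v, [/\ u \in X k, v \in X m & E u v]) ->
  exists c, forall k, B c :&: X k != set0.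
Proof.
move=> td sXV X_nz X_conn X_adj.
have [[t_sym t_irr I_nz t_conn t_edges] _ cover edge_bag _] := td.
have meets x k i : x \in X k -> x \in B i -> i \in [set i | B i :&: X k != set0].
  by move=> xk xi; rewrite inE; apply/set0Pn; exists x; rewrite inE xi xk.
have [c Mc] : exists c, forall k, c \in [set i | B i :&: X k != set0].
  apply: (subtree_helly t_sym t_irr (n := #|I|.-1) (W := setT)) => //.
  - by rewrite cardsT prednK.
  - move=> x y _ _; rewrite (@eq_connect _ _ t) // => a b.
    by rewrite /induced_rel /= !inE !andbT.
  - rewrite /edge_count -t_edges; apply: eq_card => a.
    by rewrite !inE /induced_rel /= !inE !andbT.
  - by move=> k; apply: connected_in_bags_meeting td (sXV k) (X_conn k).
  - move=> k m; apply/set0Pn; case: (eqVneq k m) => [<- | km].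
      case/set0Pn: (X_nz k) => v vk; have [i vi] := cover v (subsetP (sXV k) v vk).
      by exists i; rewrite setIid (meets v k).
    have [u [v [uk vm Euv]]] := X_adj k m km.
    have [i /andP[ui vi]] := edge_bag u v (subsetP (sXV k) u uk) (subsetP (sXV m) v vm) Euv.
    by exists i; rewrite inE (meets u k) ?(meets v m).
by exists c => k; move: (Mc k); rewrite inE.
Qed.

Lemma tw_le_clique_minor (T K : finType) (V : {set T}) (E : rel T)
    (X : K -> {set T}) n :
  (forall k, X k \subset V) -> (forall k, X k != set0) ->
  (forall k, connected_in E (X k)) ->
  (forall k m, k != m -> exists u v, [/\ u \in X k, v \in X m & E u v]) ->
  (forall k m x, x \in X k -> x \in X m -> k = m) ->
  tw_le V E n -> #|K| <= n.+1.
Proof.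
move=> sXV X_nz X_conn X_adj X_disj [I [t [B [td bag_size]]]].
have [c Bc] := bag_meets_branch_sets td sXV X_nz X_conn X_adj.
have [f f_mem] : exists f : K -> T, forall k, f k \in B c :&: X k.
  apply: (@fin_all_exists _ (fun _ => T) (fun k x => x \in B c :&: X k)) => k.
  exact/set0Pn.
have f_inj : injective f.
  move=> k m fkm; have /setIP[_ fk] := f_mem k; have /setIP[_ fm] := f_mem m.
  by apply: X_disj fk _; rewrite fkm.
apply: leq_trans (bag_size c); rewrite -cardsT -(card_imset _ f_inj).
apply: subset_leq_card; apply/subsetP => _ /imsetP[k _ ->].
by case/setIP: (f_mem k).
Qed.

Lemma path_connected_in (T : finType) (e : rel T) x s :
  symmetric e -> path e x s -> connected_in e [set y in x :: s].
Proof.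
move=> e_sym xs; set A := [set y in x :: s].
have xs_A : path (induced_rel e A) x s.
  apply: (sub_in_path (P := [in A])) xs; last by apply/allP => y ys; rewrite inE.
  by move=> y z yA zA eyz; rewrite /induced_rel /= eyz; apply/andP; split.
have x_conn y : y \in A -> connect (induced_rel e A) x y.
  by rewrite inE; apply: path_connect.
move=> y z yA zA; apply: connect_trans (x_conn z zA).
by rewrite (sym_connect_sym (induced_rel_sym A e_sym)); apply: x_conn.
Qed.

Lemma crossing_chords_not_tw_le2 (T : finType) (V : {set T}) (H : rel T)
    x1 x2 x3 x4 s1 s2 s3 s4 :
  symmetric H ->
  let c := x1 :: s1 ++ x2 :: s2 ++ x3 :: s3 ++ x4 :: s4 in
  uniq c -> {subset c <= V} -> cycle H c -> H x1 x3 -> H x2 x4 -> ~ tw_le V H 2.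
Proof.
move=> H_sym c c_uniq c_V c_cycle H13 H24 tw.
move: c_cycle; rewrite /c /= rcons_cat /= rcons_cat /= rcons_cat /=.
rewrite cat_path /= => /and3P[p1 H12].
rewrite cat_path /= => /and3P[p2 H23].
rewrite cat_path /= => /and3P[p3 H34].
rewrite rcons_path => /andP[p4 H41].
suff : #|'I_4| <= 3 by rewrite card_ord.
pose pieces := [:: x1 :: s1; x2 :: s2; x3 :: s3; x4 :: s4].
have c_pieces : c = flatten pieces by rewrite /= cats0.
apply: (tw_le_clique_minor (X := fun k : 'I_4 => [set y in nth [::] pieces k])) tw.
- move=> k; apply/subsetP => y; rewrite inE => yk; apply: c_V.
  rewrite c_pieces; apply/flattenP; exists (nth [::] pieces k) => //.
  by rewrite mem_nth // size_tuple.
- by case=> [[|[|[|[|//]]]] ?]; apply/set0Pn; eexists; rewrite inE; apply: mem_head.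
- by case=> [[|[|[|[|//]]]] ?]; apply: path_connected_in.
- move=> k m; wlog km_lt : k m / k < m.
    move=> wlog_lt km; case: (ltngtP k m) => [k_lt_m | m_lt_k | /val_inj km_eq].
    + exact: wlog_lt.
    + have := wlog_lt m k m_lt_k; rewrite eq_sym => /(_ km)[u [v [um vk Huv]]].
      by exists v, u; rewrite H_sym.
    + by rewrite km_eq eqxx in km.
  move=> _.
  case: k m km_lt => [[|[|[|[|//]]]] ?] [[|[|[|[|//]]]] ?] //= _.
  + by exists (last x1 s1), x2; rewrite !in_set mem_last mem_head.
  + by exists x1, x3; rewrite !in_set !mem_head.
  + by exists x1, (last x4 s4); rewrite !in_set mem_last mem_head H_sym.
  + by exists (last x2 s2), x3; rewrite !in_set mem_last mem_head.
  + by exists x2, x4; rewrite !in_set !mem_head.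
  + by exists (last x3 s3), x4; rewrite !in_set mem_last mem_head.
- move=> k m y; rewrite !inE => yk ym; apply: val_inj.
  by apply: (uniq_flatten_mem_nth (ss := pieces)) yk ym; rewrite -c_pieces.
Qed.

Lemma cycle_chord_noncrossing (T : finType) (V : {set T}) (H : rel T) x y A B u v :
  symmetric H -> tw_le V H 2 ->
  let c := x :: A ++ y :: B in
  uniq c -> {subset c <= V} -> cycle H c -> H x y -> u \in A -> v \in B -> ~~ H u v.
Proof.
move=> H_sym tw c; rewrite {}/c => c_uniq c_V c_cycle Hxy uA vB; apply/negP => Huv.
case/splitPr: uA c_uniq c_V c_cycle => A1 A2; case/splitPr: vB => B1 B2.
rewrite -!catA /= => c_uniq c_V c_cycle.
exact: (crossing_chords_not_tw_le2 H_sym c_uniq c_V c_cycle Hxy Huv tw).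
Qed.

Lemma separates_noncrossing (T : finType) (V : {set T}) (E : rel T) (X A B : {set T}) :
  symmetric E -> V :\: X \subset A :|: B -> [disjoint A & B] ->
  (forall u v, u \in A -> v \in B -> ~~ E u v) -> separates V E X A B.
Proof.
move=> E_sym sVAB dAB noEAB a b aA bB; apply/negP => ab.
have A_closed : closed (induced_rel E (V :\: X)) A.
  apply: intro_closed; first exact/sym_connect_sym/induced_rel_sym.
  move=> x y /andP[/andP[Exy xVX] yVX] xA; move/subsetP/(_ y yVX): sVAB.
  by case/setUP => // yB; move: (noEAB x y xA yB); rewrite Exy.
have := closed_connect A_closed ab; rewrite aA => /esym bA.
by move: dAB; rewrite disjoint_sym => /disjointFr/(_ bB); rewrite bA.
Qed.

Lemma cycle_chord_separates (T : finType) (V : {set T}) (E H : rel T) x y A B :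
  symmetric E -> symmetric H -> subrel E H -> tw_le V H 2 ->
  let c := x :: A ++ y :: B in
  uniq c -> c =i V -> cycle H c -> H x y ->
  separates V E [set x; y] [set z in B] [set z in A].
Proof.
move=> E_sym H_sym EH tw c c_uniq c_V c_cycle Hxy.
apply: separates_noncrossing => //.
- apply/subsetP => z /setDP[]; rewrite -c_V in_set2 in_setU !in_set !(in_cons, mem_cat).
  by case: (z == x); case: (z == y); rewrite //= orbC.
- move: c_uniq; rewrite /= cat_uniq /= => /and4P[_ _ /norP[_ /hasPn AB] _].
  by rewrite disjoints_subset; apply/subsetP => z; rewrite in_setC !in_set => /AB.
move=> u v; rewrite !in_set => uB vA; apply: contra (@EH u v) _.
have c_sub_V : {subset c <= V} by move=> z; rewrite c_V.
by rewrite H_sym (cycle_chord_noncrossing H_sym tw c_uniq c_sub_V c_cycle Hxy vA uB).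
Qed.

Lemma add2edges_sym (T : finType) (F : rel T) x1 y1 x2 y2 :
  symmetric F -> symmetric (add2edges F x1 y1 x2 y2).
Proof.
move=> F_sym x y; rewrite /add2edges /= F_sym.
rewrite !(andbC (y == _)).
by case: ((x == x1) && _); case: ((x == y1) && _);
   case: ((x == x2) && _); case: ((x == y2) && _); rewrite ?orbT.
Qed.

Lemma induced_path_path (T : finType) (e : rel T) x s :
  induced_path e (x :: s) -> path e x s.
Proof.
case=> _ _ adj; apply/(pathP x) => k ks.
have := adj (@Ordinal (size (x :: s)) k (ltnW ks)) (@Ordinal (size (x :: s)) k.+1 ks).
by rewrite !(tnth_nth x) /= eqxx.
Qed.

Lemma induced_paths_cycle (T : finType) (e : rel T) p Ps q Qs (S : {set T}) :
  symmetric e -> induced_path e (p :: Ps) -> induced_path e (q :: Qs) ->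
  {subset (p :: Ps) ++ (q :: Qs) <= S} ->
  cycle (add2edges (induced_rel e S) p q (last p Ps) (last q Qs))
        ((p :: Ps) ++ rev (q :: Qs)).
Proof.
move=> e_sym P_ind Q_ind PQ_S; set H := add2edges _ _ _ _ _.
have path_H x s : induced_path e (x :: s) -> {subset x :: s <= S} -> path H x s.
  move=> /induced_path_path xs sS; apply: (sub_in_path (P := [in S])) xs; last exact/allP.
  by move=> y z yS zS eyz; rewrite /H /add2edges /induced_rel /= eyz yS zS.
apply: cycle_cat_rev; rewrite /H /add2edges /= ?eqxx ?orbT //.
- exact/add2edges_sym/induced_rel_sym.
- by apply: path_H P_ind _ => x xP; apply: PQ_S; rewrite mem_cat xP.
- by apply: path_H Q_ind _ => x xQ; apply: PQ_S; rewrite mem_cat xQ orbT.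
Qed.

Theorem mainTheorem13 (T : finType) (e : rel T) (p : T) (Ps : seq T) (q : T) (Qs : seq T) :
  simple_graph e ->
  induced_path e (p :: Ps) ->
  induced_path e (q :: Qs) ->
  [disjoint (p :: Ps) & (q :: Qs)] ->
  let S := [set x | (x \in p :: Ps) || (x \in q :: Qs)] in
  tw_le S (add2edges (induced_rel e S) p q (last p Ps) (last q Qs)) 2 ->
  forall (i : 'I_(size (p :: Ps))) (j : 'I_(size (q :: Qs))),
    e (tnth (in_tuple (p :: Ps)) i) (tnth (in_tuple (q :: Qs)) j) ->
    separates S (induced_rel e S)
      [set tnth (in_tuple (p :: Ps)) i; tnth (in_tuple (q :: Qs)) j]
      [set x | (x \in take i (p :: Ps)) || (x \in take j (q :: Qs))]
      [set x | (x \in drop i.+1 (p :: Ps)) || (x \in drop j.+1 (q :: Qs))].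
Proof.
move=> [e_sym _] P_ind Q_ind PQ_disj S tw i j eij.
rewrite !(tnth_nth p) in eij *.
have PQ_S : {subset (p :: Ps) ++ (q :: Qs) <= S} by move=> x; rewrite mem_cat in_set.
have c_cycle := induced_paths_cycle e_sym P_ind Q_ind PQ_S.
have c_uniq : uniq ((p :: Ps) ++ rev (q :: Qs)).
  case: P_ind Q_ind => _ P_uniq _ [_ Q_uniq _].
  by rewrite cat_uniq rev_uniq P_uniq Q_uniq has_rev -disjoint_has disjoint_sym PQ_disj.
have c_mem x : (x \in rot i ((p :: Ps) ++ rev (q :: Qs))) = (x \in S).
  by rewrite mem_rot mem_cat mem_rev in_set.
rewrite -(rot_cycle i) -(rot_uniq i) !(rot_cat_rev p (ltn_ord i) (ltn_ord j))
  in c_cycle c_uniq c_mem.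
have -> : [set x | (x \in take i (p :: Ps)) || (x \in take j (q :: Qs))]
    = [set x in rev (take j (q :: Qs)) ++ take i (p :: Ps)].
  by apply/setP => x; rewrite !in_set mem_cat mem_rev orbC.
have -> : [set x | (x \in drop i.+1 (p :: Ps)) || (x \in drop j.+1 (q :: Qs))]
    = [set x in drop i.+1 (p :: Ps) ++ rev (drop j.+1 (q :: Qs))].
  by apply/setP => x; rewrite !in_set mem_cat mem_rev.
apply: (cycle_chord_separates _ _ _ _ c_uniq c_mem c_cycle).
- exact: induced_rel_sym.
- exact/add2edges_sym/induced_rel_sym.
- by move=> x y Exy; rewrite /add2edges /= Exy.
- exact: tw.
by rewrite /add2edges /induced_rel /= eij -!c_mem !(in_cons, mem_cat) !eqxx ?orbT.
Qed.
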